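(* Let $G$ be a finite group, $H\le G$, $g\in G$, and $C=H\cap H^g$. Then $\langle H,\psi_{g^{-1},H}(H)\rangle\cong I(\mathbb{Z}[H/C])\rtimes H$ (inside $\mathcal{U}(\mathbb{Z}G)$), where $h\in H$ acts on $I(\mathbb{Z}[H/C])$ by left multiplication by $h^{-1}$. In particular, the normal subgroup generated by the units $1+(1-h)g^{-1}\widetilde{H}$, $h\in H$, is free abelian of rank $[H:C]-1$.
   Context: $\widetilde{H}=\sum_{h\in H}h$; $\psi_{g^{-1},H}:H\to\mathcal{U}(\mathbb{Z}G)$, $h\mapsto h+(1-h)g^{-1}\widetilde{H}$. $H^g=g^{-1}Hg$. $I(\mathbb{Z}[H/C])$ is the kernel of the $\mathbb{Z}H$-module map $\mathbb{Z}[H/C]\to\mathbb{Z}$, $hC\mapsto1$. *)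

From HB Require Import structures.
From mathcomp Require Import all_boot all_order all_algebra all_fingroup.
Set Implicit Arguments. Unset Strict Implicit. Unset Printing Implicit Defensive.
Import GRing.Theory.
Local Open Scope ring_scope.

Definition ZG (gT : finGroupType) := {ffun gT -> int}.

Section GroupRing.
Variable gT : finGroupType.

Definition zgmul (u v : ZG gT) : ZG gT :=
  [ffun x => \sum_(y : gT) u y * v (y^-1 * x)%g].

Definition zgof (x : gT) : ZG gT := [ffun y => ((y == x) : nat)%:Z].
Definition zgone : ZG gT := zgof 1%g.
Definition zgadd (u v : ZG gT) : ZG gT := [ffun x => u x + v x].
Definition zgsub (u v : ZG gT) : ZG gT := [ffun x => u x - v x].

Definition hsum (H : {set gT}) : ZG gT := [ffun y => ((y \in H) : nat)%:Z].

Definition psi (x : gT) (H : {set gT}) (h : gT) : ZG gT :=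
  zgadd (zgof h) (zgmul (zgsub zgone (zgof h)) (zgmul (zgof x) (hsum H))).

Definition zginv (u v : ZG gT) : Prop := zgmul u v = zgone /\ zgmul v u = zgone.

Inductive gen (S : ZG gT -> Prop) : ZG gT -> Prop :=
| gen_one : gen S zgone
| gen_mul : forall s x, S s -> gen S x -> gen S (zgmul s x)
| gen_mulinv : forall s t x, S s -> zginv s t -> gen S x -> gen S (zgmul t x).

Definition normal_closure_in (S U : ZG gT -> Prop) : ZG gT -> Prop :=
  gen (fun u => exists k kinv w, [/\ gen S k, zginv k kinv, U w &
                                      u = zgmul (zgmul k w) kinv]).

(* Z[H/C]: integer functions on {set gT}, supported on the left cosets hC, h in H.
   I(Z[H/C]) : those with coefficient sum 0 (kernel of augmentation hC |-> 1). *)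
Definition in_aug_ideal (H C : {set gT}) (a : {ffun {set gT} -> int}) : Prop :=
  (forall X, X \notin lcosets C H -> a X = 0) /\ \sum_(X in lcosets C H) a X = 0.

(* action of h on Z[H/C] by left multiplication by h^-1:
   coefficient of X in h^-1 . a is the coefficient of hX in a *)
Definition actinv (h : gT) (a : {ffun {set gT} -> int}) : {ffun {set gT} -> int} :=
  [ffun X => a (lcoset X h)].

(* the semidirect product I(Z[H/C]) x| H for this (right) action:
   (a,h)(b,k) = (k^-1 . a + b, hk) *)
Definition sd_dom (H C : {set gT}) (p : {ffun {set gT} -> int} * gT) : Prop :=
  in_aug_ideal H C p.1 /\ p.2 \in H.

Definition sdmul (p q : {ffun {set gT} -> int} * gT) : {ffun {set gT} -> int} * gT :=
  (actinv q.2 p.1 + q.1, (p.2 * q.2)%g).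

End GroupRing.

(* Put [K = g^-1 H~].  Since [c K = K] for [c] in [C] and [K h = K] for [h] in [H], the
   assignment [hC |-> h K] extends to a Z-linear map [tau : Z[H/C] -> ZG], and
   [tau a * tau b = aug b * tau a * K].  Hence [a |-> 1 + tau a] is a homomorphism from
   the augmentation ideal [I] into the units of ZG; it is injective because the
   coefficient of [tau a] at [x g^-1] is [a (xC)].  Conjugation by [h] in [H] turns
   [tau a] into [tau (h^-1 . a)] and [psi h = h (1 + tau (h^-1 C - C))], so
   [(a, h) |-> h (1 + tau a)] embeds [I x| H] onto [<H, psi(H)>].  The units
   [1 + (1 - h) K] are [1 + tau (C - hC)]; as the [hC - C] with [hC <> C] form a
   Z-basis of [I], their normal closure is [1 + tau I], free abelian of rank [[H:C] - 1]. *)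

From HB Require Import structures.
From mathcomp Require Import all_boot all_order all_algebra all_fingroup.
Set Implicit Arguments. Unset Strict Implicit. Unset Printing Implicit Defensive.
Import GRing.Theory.
Local Open Scope ring_scope.

Lemma mulrz_closed (V : zmodType) (P : V -> Prop) :
  P 0 -> (forall u v, P u -> P v -> P (u + v)) ->
  forall v, P v -> P (- v) -> forall z : int, P (v *~ z).
Proof.
move=> P0 PD v Pv PNv.
have PMn w n : P w -> P (w *+ n) by move=> Pw; elim: n => // n; rewrite mulrS; apply: PD.
by case=> n; [rewrite -pmulrn | rewrite NegzE mulrNz -pmulrn -mulNrn]; apply: PMn.
Qed.

Lemma mulr_linv_uniq (R : pzRingType) (x y t : R) : x * y = 1 -> t * x = 1 -> t = y.
Proof. by move=> xy tx; rewrite -[t]mulr1 -xy mulrA tx mul1r. Qed.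

Section GroupRing.
Variable gT : finGroupType.

Definition zg : Type := ZG gT.
HB.instance Definition _ := GRing.Zmodule.on zg.

Lemma zgmulA : associative (@zgmul gT).
Proof.
move=> u v w; apply/ffunP=> x; rewrite /zgmul !ffunE; symmetry.
under eq_bigr => z _ do rewrite ffunE big_distrl /=.
rewrite exchange_big /=; apply: eq_bigr => y _.
rewrite (reindex_inj (mulgI y)) /= ffunE big_distrr /=; apply: eq_bigr => z _.
by rewrite mulKg mulrA invMg mulgA.
Qed.

Lemma zgmul1r : left_id (zgone gT) (@zgmul gT).
Proof.
move=> u; apply/ffunP=> x; rewrite ffunE (bigD1 1%g) //= big1 ?addr0.
  by rewrite ffunE eqxx invg1 mul1g mul1r.
by move=> y /negbTE ny; rewrite ffunE ny mul0r.
Qed.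

Lemma zgmulr1 : right_id (zgone gT) (@zgmul gT).
Proof.
move=> u; apply/ffunP=> x; rewrite ffunE (bigD1 x) //= big1 ?addr0.
  by rewrite ffunE mulVg eqxx mulr1.
move=> y ny; rewrite ffunE; case: eqP => [e|]; last by rewrite mulr0.
by move: ny; rewrite -(mulKVg y x) e mulg1 eqxx.
Qed.

Lemma zgmulDl : left_distributive (@zgmul gT) (+%R : zg -> zg -> zg).
Proof.
move=> u v w; apply/ffunP=> x; rewrite !ffunE -big_split /=.
by apply: eq_bigr => y _; rewrite ffunE mulrDl.
Qed.

Lemma zgmulDr : right_distributive (@zgmul gT) (+%R : zg -> zg -> zg).
Proof.
move=> u v w; apply/ffunP=> x; rewrite !ffunE -big_split /=.
by apply: eq_bigr => y _; rewrite ffunE mulrDr.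
Qed.

HB.instance Definition _ := GRing.Zmodule_isPzRing.Build zg
  zgmulA zgmul1r zgmulr1 zgmulDl zgmulDr.

Lemma zgmulE (u v : zg) : zgmul u v = u * v. Proof. by []. Qed.
Lemma zgoneE : zgone gT = 1 :> zg. Proof. by []. Qed.
Lemma zgaddE (u v : zg) : zgadd u v = u + v.
Proof. by apply/ffunP=> x; rewrite !ffunE. Qed.
Lemma zgsubE (u v : zg) : zgsub u v = u - v.
Proof. by apply/ffunP=> x; rewrite !ffunE. Qed.

Definition elt (x : gT) : zg := zgof x.

Lemma eltE a z : elt a z = ((z == a) : nat)%:Z.
Proof. by rewrite ffunE. Qed.

Lemma elt_mulE a (u : zg) z : (elt a * u) z = u (a^-1 * z)%g.
Proof.
rewrite -zgmulE ffunE (bigD1 a) //= big1 ?addr0; first by rewrite eltE eqxx mul1r.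
by move=> y /negbTE ny; rewrite eltE ny mul0r.
Qed.

Lemma mul_eltE a (u : zg) z : (u * elt a) z = u (z * a^-1)%g.
Proof.
rewrite -zgmulE ffunE (bigD1 (z * a^-1)%g) //= big1 ?addr0.
  by rewrite eltE invMg invgK mulgKV eqxx mulr1.
move=> y ny; rewrite eltE; case: eqP => [e|]; last by rewrite mulr0.
by move: ny; rewrite -e invMg invgK mulKVg eqxx.
Qed.

Lemma elt1 : elt 1 = 1. Proof. by []. Qed.

Lemma eltM x y : elt (x * y)%g = elt x * elt y.
Proof.
apply/ffunP=> z; rewrite elt_mulE !eltE; congr (_ %:Z); congr nat_of_bool.
by apply/eqP/eqP => [->|<-]; [rewrite mulKg | rewrite mulKVg].
Qed.

Lemma eltVK x : elt x^-1 * elt x = 1. Proof. by rewrite -eltM mulVg. Qed.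
Lemma eltKV x : elt x * elt x^-1 = 1. Proof. by rewrite -eltM mulgV. Qed.

Lemma gen_mul_closed (S : ZG gT -> Prop) x y :
  gen S x -> gen S y -> gen S (zgmul x y).
Proof.
elim=> [|s x' Ss _ IH|s t x' Ss st _ IH] Gy; rewrite ?zgmulE.
- by rewrite zgoneE mul1r.
- by rewrite -mulrA; apply: gen_mul (IH Gy).
- by rewrite -mulrA; apply: gen_mulinv st (IH Gy).
Qed.

End GroupRing.

Section CosetEmbedding.
Variable gT : finGroupType.
Variables (H : {group gT}) (g : gT).
Local Notation zg := (zg gT).
Local Notation elt := (@elt gT).
Let C := (H :&: (H :^ g))%g.
Let L := lcosets C H.
Let Ht : zg := hsum H.
Let K : zg := elt g^-1 * Ht.

Lemma elt_Ht m : m \in H -> elt m * Ht = Ht.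
Proof. by move=> Hm; apply/ffunP=> z; rewrite elt_mulE !ffunE groupMl ?groupV. Qed.

Lemma Ht_elt m : m \in H -> Ht * elt m = Ht.
Proof. by move=> Hm; apply/ffunP=> z; rewrite mul_eltE !ffunE groupMr ?groupV. Qed.

Lemma K_elt m : m \in H -> K * elt m = K.
Proof. by move=> Hm; rewrite /K -mulrA Ht_elt. Qed.

(* [c g^-1 = g^-1 (c ^ g^-1)] and [c ^ g^-1] lies in [H] because [c] lies in [H :^ g]. *)
Lemma elt_K c : c \in C -> elt c * K = K.
Proof.
rewrite inE => /andP[_]; rewrite mem_conjg => Hc.
rewrite /K mulrA -eltM -[(c * g^-1)%g](mulKg g) eltM -mulrA.
have -> : (g * (c * g^-1))%g = (c ^ g^-1)%g by rewrite /conjg invgK.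
by rewrite elt_Ht.
Qed.

Lemma C_lcosets : C \in L.
Proof. by apply/lcosetsP; exists 1%g; rewrite ?group1 ?lcoset1. Qed.

Lemma lcosets_act k (X : {set gT}) : k \in H -> ((k *: X)%g \in L) = (X \in L).
Proof.
have imp k' (Y : {set gT}) : k' \in H -> Y \in L -> (k' *: Y)%g \in L.
  by move=> Hk /lcosetsP[y Hy ->]; apply/lcosetsP; exists (k' * y)%g; rewrite ?groupM ?lcosetM.
move=> Hk; apply/idP/idP; last exact: imp.
by move=> /(imp k^-1%g); rewrite lcosetK; apply; rewrite groupV.
Qed.

Lemma repr_lcoset X : X \in L -> (repr X *: C)%g = X.
Proof.
by move=> /lcosetsP[y _ ->]; apply/lcoset_eqP; apply: (mem_repr y); rewrite lcoset_refl.
Qed.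

Lemma repr_lcoset_in X : X \in L -> repr X \in X.
Proof. by move=> /repr_lcoset {2}<-; apply: lcoset_refl. Qed.

Lemma mem_lcosets_sub X x : X \in L -> x \in X -> x \in H.
Proof.
case/lcosetsP=> y Hy -> /lcosetP[c /setIP[Hc _] ->]; exact: groupM.
Qed.

Lemma repr_lcosets X : X \in L -> repr X \in H.
Proof. by move=> LX; apply: mem_lcosets_sub LX (repr_lcoset_in LX). Qed.

Definition coset_elt X : zg := elt (repr X) * K.

Lemma coset_eltE X x : X \in L -> x \in X -> coset_elt X = elt x * K.
Proof.
move=> LX; rewrite -{1}(repr_lcoset LX) => /lcosetP[c Cc ->].
by rewrite eltM -mulrA elt_K.
Qed.

Lemma coset_elt_C : coset_elt C = K.
Proof. by rewrite (coset_eltE C_lcosets (group1 _)) elt1 mul1r. Qed.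

Lemma coset_elt_elt X m : m \in H -> coset_elt X * elt m = coset_elt X.
Proof. by move=> Hm; rewrite /coset_elt -mulrA K_elt. Qed.

Lemma coset_elt_conj k X : k \in H -> X \in L ->
  elt k^-1 * coset_elt X * elt k = coset_elt (k^-1 *: X)%g.
Proof.
move=> Hk LX; rewrite -mulrA coset_elt_elt // (@coset_eltE (k^-1 *: X)%g (k^-1 * repr X)%g).
- by rewrite {1}/coset_elt mulrA -eltM.
- by rewrite lcosets_act ?groupV.
- by rewrite mem_lcoset invgK mulKVg repr_lcoset_in.
Qed.

(* The coefficient of [coset_elt X] at [repr Y * g^-1] is [1] iff [(repr X)^-1 * repr Y]
   lies in [H :^ g], i.e. in [C], i.e. iff [X = Y]. *)
Lemma coset_elt_coeff X Y : X \in L -> Y \in L ->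
  coset_elt X (repr Y * g^-1)%g = ((X == Y) : nat)%:Z.
Proof.
move=> LX LY; rewrite /coset_elt /K !elt_mulE ffunE invgK.
congr (_ %:Z); congr nat_of_bool.
have -> : (g * ((repr X)^-1 * (repr Y * g^-1)))%g = (((repr X)^-1 * repr Y) ^ g^-1)%g.
  by rewrite /conjg invgK !mulgA.
rewrite -mem_conjg.
have -> : (((repr X)^-1 * repr Y)%g \in (H :^ g)%g) = (((repr X)^-1 * repr Y)%g \in C).
  by rewrite /C inE (groupM (groupVr (repr_lcosets LX)) (repr_lcosets LY)).
rewrite -mem_lcoset; apply/idP/eqP => [/lcoset_eqP|->]; last exact: lcoset_refl.
by rewrite !repr_lcoset.
Qed.

Definition tau (a : {ffun {set gT} -> int}) : zg := \sum_(X in L) coset_elt X *~ a X.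
Definition aug (a : {ffun {set gT} -> int}) : int := \sum_(X in L) a X.

Lemma tau_is_zmod_morphism : {morph tau : a b / a - b}.
Proof.
by move=> a b; rewrite /tau -sumrB; apply: eq_bigr => X _; rewrite !ffunE mulrzBr.
Qed.
HB.instance Definition _ := GRing.isZmodMorphism.Build _ _ tau tau_is_zmod_morphism.

Lemma aug_is_zmod_morphism : {morph aug : a b / a - b}.
Proof. by move=> a b; rewrite /aug -sumrB; apply: eq_bigr => X _; rewrite !ffunE. Qed.
HB.instance Definition _ := GRing.isZmodMorphism.Build _ _ aug aug_is_zmod_morphism.

Lemma tau_mul a b : tau a * tau b = (tau a * K) *~ aug b.
Proof.
rewrite {2}/tau mulr_sumr /aug mulrz_sumr; apply: eq_bigr => Y LY.
rewrite mulrzAr /tau !mulr_suml; congr (_ *~ _); apply: eq_bigr => X _.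
by rewrite !mulrzAl {1}/coset_elt mulrA coset_elt_elt ?repr_lcosets.
Qed.

Lemma mul_unit_tau a b : aug b = 0 -> (1 + tau a) * (1 + tau b) = 1 + tau (a + b).
Proof.
move=> ab; rewrite mulrDl !mulrDr !mul1r mulr1 tau_mul ab mulr0z addr0 raddfD.
by rewrite -addrA [tau b + _]addrC.
Qed.

Lemma tau_elt a m : m \in H -> tau a * elt m = tau a.
Proof.
by move=> Hm; rewrite /tau mulr_suml; apply: eq_bigr => X _; rewrite mulrzAl coset_elt_elt.
Qed.

Lemma actinvE (k : gT) a (X : {set gT}) : actinv k a X = a (k *: X)%g.
Proof. by rewrite ffunE lcosetE. Qed.

Lemma tau_conj k a : k \in H -> elt k^-1 * tau a * elt k = tau (actinv k a).
Proof.
move=> Hk; rewrite /tau mulr_sumr mulr_suml.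
rewrite [RHS](reindex_inj (can_inj (lcosetK k^-1%g))) /=.
apply: eq_big => [X|X LX]; first by rewrite lcosets_act ?groupV.
by rewrite actinvE lcosetKV mulrzAr mulrzAl coset_elt_conj.
Qed.

Lemma sum_lcosets_delta (V : zmodType) (F : {set gT} -> V) X :
  X \in L -> \sum_(Y in L) F Y *~ ((Y == X) : nat)%:Z = F X.
Proof.
move=> LX; rewrite (bigD1 X) //= eqxx mulr1z big1 ?addr0 //.
by move=> Y /andP[_ /negbTE ->]; rewrite mulr0z.
Qed.

Lemma tau_coeff c Y : Y \in L -> tau c (repr Y * g^-1)%g = c Y.
Proof.
move=> LY; rewrite /tau sum_ffunE -(sum_lcosets_delta c LY); apply: eq_bigr => X LX.
by rewrite ffunMzE coset_elt_coeff // !mulrzz mulrC.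
Qed.

Lemma tau_inj_lcosets a b : tau a = tau b -> {in L, a =1 b}.
Proof. by move=> eq_ab Y LY; rewrite -!tau_coeff // eq_ab. Qed.

Lemma aug_actinv k a : k \in H -> aug (actinv k a) = aug a.
Proof.
move=> Hk; rewrite /aug [RHS](reindex_inj (can_inj (lcosetK k))) /=.
apply: eq_big => [X|X LX]; first by rewrite lcosets_act.
by rewrite actinvE.
Qed.

Lemma aug_idealE a :
  in_aug_ideal H C a <-> (forall X, X \notin L -> a X = 0) /\ aug a = 0.
Proof. by []. Qed.

Lemma aug_ideal0 : in_aug_ideal H C 0.
Proof. by apply/aug_idealE; split=> [X _|]; [rewrite ffunE | exact: raddf0]. Qed.

Lemma aug_idealD a b :
  in_aug_ideal H C a -> in_aug_ideal H C b -> in_aug_ideal H C (a + b).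
Proof.
move=> /aug_idealE[sa ua] /aug_idealE[sb ub]; apply/aug_idealE; split=> [X nX|].
  by rewrite ffunE sa // sb // addr0.
by rewrite raddfD /= ua ub addr0.
Qed.

Lemma aug_idealN a : in_aug_ideal H C a -> in_aug_ideal H C (- a).
Proof.
move=> /aug_idealE[sa ua]; apply/aug_idealE; split=> [X nX|].
  by rewrite ffunE sa // oppr0.
by rewrite raddfN /= ua oppr0.
Qed.

Lemma aug_idealMz a z : in_aug_ideal H C a -> in_aug_ideal H C (a *~ z).
Proof.
move=> Ia; apply: mulrz_closed => //.
- exact: aug_ideal0.
- exact: aug_idealD.
- exact: aug_idealN.
Qed.

Lemma aug_ideal_actinv k a :
  k \in H -> in_aug_ideal H C a -> in_aug_ideal H C (actinv k a).
Proof.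
move=> Hk /aug_idealE[sa ua]; apply/aug_idealE; split=> [X nX|].
  by rewrite actinvE sa // lcosets_act.
by rewrite aug_actinv.
Qed.

Definition dcoset (X : {set gT}) : {ffun {set gT} -> int} :=
  [ffun Y => ((Y == X) : nat)%:Z - ((Y == C) : nat)%:Z].

Lemma dcoset_C : dcoset C = 0.
Proof. by apply/ffunP=> Y; rewrite !ffunE subrr. Qed.

Lemma tau_dcoset X : X \in L -> tau (dcoset X) = coset_elt X - K.
Proof.
move=> LX; rewrite /tau; under eq_bigr => Y _ do rewrite ffunE mulrzBr.
by rewrite sumrB !sum_lcosets_delta ?coset_elt_C ?C_lcosets.
Qed.

Lemma aug_ideal_dcoset X : X \in L -> in_aug_ideal H C (dcoset X).
Proof.
move=> LX; apply/aug_idealE; split=> [Y nY|].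
  rewrite ffunE; case: eqP => [eYX|_]; first by rewrite eYX LX in nY.
  by case: eqP => [eYC|_]; first by rewrite eYC C_lcosets in nY.
have sum_delta Z : Z \in L -> \sum_(Y in L) ((Y == Z) : nat)%:Z = 1.
  move=> LZ; rewrite -(sum_lcosets_delta (fun _ => 1 : int) LZ).
  by apply: eq_bigr => Y _; rewrite intz.
rewrite /aug; under eq_bigr => Y _ do rewrite ffunE.
by rewrite sumrB !sum_delta ?C_lcosets // subrr.
Qed.

Lemma aug_ideal_decomp a : in_aug_ideal H C a -> \sum_(X in L) dcoset X *~ a X = a.
Proof.
move=> /aug_idealE[sa ua]; apply/ffunP=> Y; rewrite sum_ffunE.
under eq_bigr => X _ do rewrite ffunMzE ffunE mulrzBl.
rewrite sumrB -mulrz_sumr [\sum_(X in L) a X]ua mulr0z subr0.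
have [LY|nLY] := boolP (Y \in L).
  by rewrite -(sum_lcosets_delta a LY); apply: eq_bigr => X _; rewrite !mulrzz mulrC eq_sym.
rewrite sa // big1 // => X LX.
by case: eqP => [eYX|_]; [rewrite eYX LX in nLY | exact: mul0rz].
Qed.

Lemma unit_tau_inv a : aug a = 0 -> zginv (1 + tau a) (1 + tau (- a)).
Proof.
move=> ua; have uNa : aug (- a) = 0 by rewrite raddfN /= ua oppr0.
by split; rewrite zgmulE mul_unit_tau // ?addrN ?addNr raddf0 addr0.
Qed.

Lemma actinvN (k : gT) a : actinv k (- a) = - actinv k a.
Proof. by apply/ffunP=> X; rewrite !ffunE. Qed.

Lemma actinvKV (k : gT) a : actinv k (actinv k^-1 a) = a.
Proof. by apply/ffunP=> X; rewrite !actinvE lcosetK. Qed.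

Definition sdinv (p : {ffun {set gT} -> int} * gT) := (- actinv p.2^-1 p.1, p.2^-1)%g.

Lemma sdmulV p : sdmul p (sdinv p) = (0, 1%g).
Proof. by case: p => a h; rewrite /sdmul /sdinv /= addrN mulgV. Qed.

Lemma sdmulVp p : sdmul (sdinv p) p = (0, 1%g).
Proof. by case: p => a h; rewrite /sdmul /sdinv /= actinvN actinvKV addNr mulVg. Qed.

Lemma sd_dom0 h : h \in H -> sd_dom H C (0, h).
Proof. by move=> Hh; split => //; apply: aug_ideal0. Qed.

Lemma sd_dom_mul p q : sd_dom H C p -> sd_dom H C q -> sd_dom H C (sdmul p q).
Proof.
case: p q => [a h] [b k] [/= Ia Hh] [/= Ib Hk]; split=> /=; last exact: groupM.
by apply: aug_idealD => //; apply: aug_ideal_actinv.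
Qed.

Lemma sd_dom_inv p : sd_dom H C p -> sd_dom H C (sdinv p).
Proof.
case: p => [a h] [/= Ia Hh]; split=> /=; last by rewrite groupV.
by apply/aug_idealN/aug_ideal_actinv; rewrite ?groupV.
Qed.

Definition sdembed (p : {ffun {set gT} -> int} * gT) : zg := elt p.2 * (1 + tau p.1).

Lemma sdembed0 h : sdembed (0, h) = elt h.
Proof. by rewrite /sdembed raddf0 addr0 mulr1. Qed.

Lemma unit_tau_elt k a : k \in H -> (1 + tau a) * elt k = elt k * (1 + tau (actinv k a)).
Proof. by move=> Hk; rewrite -tau_conj // mulrDr mulr1 !mulrA eltKV mul1r mulrDl mul1r. Qed.

Lemma sdembedM p q :
  sd_dom H C p -> sd_dom H C q -> sdembed (sdmul p q) = sdembed p * sdembed q.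
Proof.
case: p q => [a h] [b k] _ [/= /aug_idealE[_ ub] Hk].
rewrite /sdembed /= -mulrA [(1 + tau a) * _]mulrA unit_tau_elt // !mulrA -eltM.
by rewrite -mulrA mul_unit_tau.
Qed.

Lemma sdembedV p : sd_dom H C p -> zginv (sdembed p) (sdembed (sdinv p)).
Proof.
move=> Dp; have Dp' := sd_dom_inv Dp.
by split; rewrite zgmulE -sdembedM ?sdmulV ?sdmulVp // sdembed0.
Qed.

(* If [h != k], right multiplication by [elt (h^-1 * k)] fixes
   [elt k - elt h = elt h * tau a - elt k * tau b], yet moves its coefficient [-1] at [h]
   to the point [k], where the coefficient is [1]. *)
Lemma sdembed_inj p q :
  sd_dom H C p -> sd_dom H C q -> sdembed p = sdembed q -> p = q.
Proof.
case: p q => [a h] [b k] [/= /aug_idealE[sa _] Hh] [/= /aug_idealE[sb _] Hk].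
rewrite /sdembed /= => eq_hk.
have Ehk : h = k.
  apply/eqP; apply: contraT => nhk.
  have Hm : (h^-1 * k)%g \in H by rewrite groupM ?groupV.
  have eD : elt k - elt h = elt h * tau a - elt k * tau b.
    have := eq_hk; rewrite !mulrDr !mulr1 => eq'.
    have -> : elt h * tau a = - elt h + (elt k + elt k * tau b) by rewrite -eq' addKr.
    by rewrite addrA addrK addrC.
  have : (elt k - elt h) * elt (h^-1 * k)%g = elt k - elt h.
    by rewrite eD mulrBl -!mulrA !tau_elt.
  move/(congr1 (fun u : zg => u k)); rewrite mul_eltE !ffunE invMg invgK mulgA mulgV mul1g.
  by rewrite eqxx (negbTE nhk) eq_sym (negbTE nhk).
subst k; move: eq_hk => /(congr1 (fun u => elt h^-1 * u)); rewrite !mulrA eltVK !mul1r => /addrI eq_ab.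
congr (_, _); apply/ffunP=> X; have [LX|nLX] := boolP (X \in L).
  exact: tau_inj_lcosets eq_ab X LX.
by rewrite sa // sb.
Qed.

Lemma psi_sdembed h : h \in H -> psi g^-1 H h = sdembed (dcoset (h^-1 *: C)%g, h).
Proof.
move=> Hh; have LhC : (h^-1 *: C)%g \in L by rewrite lcosets_act ?groupV ?C_lcosets.
rewrite /sdembed tau_dcoset // (coset_eltE LhC (lcoset_refl _ _)) /psi zgaddE !zgmulE zgsubE.
rewrite zgoneE -/(elt h) -/(elt g^-1) -/Ht -/K /=.
by rewrite mulrDr mulr1 mulrBr [elt h * (elt h^-1 * K)]mulrA eltKV mul1r mulrBl mul1r addrA.
Qed.

Lemma gen_unit_tau (Q : ZG gT -> Prop) :
  (forall X, X \in L -> gen Q (1 + tau (dcoset X)) /\ gen Q (1 + tau (- dcoset X))) ->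
  forall a, in_aug_ideal H C a -> gen Q (1 + tau a).
Proof.
move=> genQ a Ia; pose P c := in_aug_ideal H C c /\ gen Q (1 + tau c).
have P0 : P 0 by split; [exact: aug_ideal0 | rewrite raddf0 addr0; exact: gen_one].
have PD u v : P u -> P v -> P (u + v).
  move=> [Iu Gu] [Iv Gv]; split; first exact: aug_idealD.
  by rewrite -mul_unit_tau; [apply: gen_mul_closed | case/aug_idealE: Iv].
suff [] : P a by [].
rewrite -(aug_ideal_decomp Ia); apply: big_ind => // X LX.
have [G G'] := genQ X LX.
by apply: mulrz_closed => //; split=> //; [|apply: aug_idealN]; apply: aug_ideal_dcoset.
Qed.

Lemma sdembed_1 a : sdembed (a, 1%g) = 1 + tau a.
Proof. by rewrite /sdembed elt1 mul1r. Qed.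

Lemma sdembed_conj_unit_tau p a : sd_dom H C p -> in_aug_ideal H C a ->
  exists2 c, in_aug_ideal H C c & sdembed p * (1 + tau a) * sdembed (sdinv p) = 1 + tau c.
Proof.
move=> Dp Ia; have Da : sd_dom H C (a, 1%g) by split; rewrite ?group1.
have Dpa := sd_dom_mul Dp Da; have Dp' := sd_dom_inv Dp.
rewrite -sdembed_1 -!sdembedM //.
set r := sdmul _ _; have [Ir _] : sd_dom H C r by apply: sd_dom_mul.
exists r.1 => //; rewrite -sdembed_1; congr sdembed.
by rewrite [LHS]surjective_pairing; congr (_, _); rewrite /r /= mulg1 mulgV.
Qed.

Let S := fun u : ZG gT => exists2 h, h \in H & (u = zgof h \/ u = psi g^-1 H h).

(* [1 + tau (dcoset X)] is [x * psi x^-1] for [x = repr X]. *)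
Lemma gen_S_unit_dcoset X : X \in L ->
  gen S (1 + tau (dcoset X)) /\ gen S (1 + tau (- dcoset X)).
Proof.
move=> LX; set x := repr X; have Hx : x \in H by apply: repr_lcosets.
have Selt y : y \in H -> S (zgof y) by move=> Hy; exists y => //; left.
have Spsi : S (psi g^-1 H x^-1) by exists x^-1%g; rewrite ?groupV //; right.
have psiE : psi g^-1 H x^-1 = elt x^-1 * (1 + tau (dcoset X)).
  by rewrite psi_sdembed ?groupV // invgK repr_lcoset.
have /aug_idealE[_ uaX] := aug_ideal_dcoset LX; have [uv vu] := unit_tau_inv uaX.
rewrite !zgmulE zgoneE in uv vu; split.
  have := gen_mul (Selt x Hx) (gen_mul Spsi (gen_one S)).
  by rewrite !zgmulE zgoneE mulr1 psiE mulrA eltKV mul1r.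
have psiV : zginv (psi g^-1 H x^-1) ((1 + tau (- dcoset X)) * elt x).
  rewrite /zginv !zgmulE psiE !mulrA; split.
    by rewrite -(mulrA (elt x^-1)) uv mulr1 eltVK.
  by rewrite -(mulrA _ (elt x)) eltKV mulr1 vu.
have := gen_mulinv Spsi psiV (gen_mul (Selt _ (groupVr Hx)) (gen_one S)).
by rewrite !zgmulE zgoneE mulr1 -mulrA eltKV mulr1.
Qed.

Lemma gen_S_sdembed u : gen S u <-> exists2 p, sd_dom H C p & sdembed p = u.
Proof.
have S_sdembed s : S s -> exists2 p, sd_dom H C p & sdembed p = s.
  case=> h Hh [->|->]; first by exists (0, h); [apply: sd_dom0 | rewrite sdembed0].
  exists (dcoset (h^-1 *: C)%g, h); last by rewrite psi_sdembed.
  by split=> //; apply: aug_ideal_dcoset; rewrite lcosets_act ?groupV ?C_lcosets.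
split.
  elim=> [|s x Ss _ [q Dq <-]|s t x Ss [_ ts] _ [q Dq <-]].
  - by exists (0, 1%g); [apply: sd_dom0 | rewrite sdembed0].
  - have [p Dp <-] := S_sdembed s Ss.
    by exists (sdmul p q); [apply: sd_dom_mul | rewrite sdembedM].
  - have [p Dp eps] := S_sdembed s Ss; have Dp' := sd_dom_inv Dp.
    have -> : t = sdembed (sdinv p).
      by apply: (@mulr_linv_uniq zg) (sdembedV Dp).1 _; rewrite eps.
    by exists (sdmul (sdinv p) q); [apply: sd_dom_mul | rewrite sdembedM].
case=> [[a h] [/= Ia Hh] <-]; rewrite /sdembed /=.
apply: (@gen_mul _ _ (zgof h)); first by exists h; [|left].
exact: gen_unit_tau gen_S_unit_dcoset _ Ia.
Qed.

Let U := fun u : ZG gT => exists2 h, h \in H &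
  u = zgadd (zgone gT) (zgmul (zgsub (zgone gT) (zgof h)) (zgmul (zgof g^-1) (hsum H))).

Lemma U_unit_tau h : h \in H ->
  zgadd (zgone gT) (zgmul (zgsub (zgone gT) (zgof h)) (zgmul (zgof g^-1) (hsum H)))
  = 1 + tau (- dcoset (h *: C)%g).
Proof.
move=> Hh; have LhC : (h *: C)%g \in L by rewrite lcosets_act ?C_lcosets.
rewrite raddfN /= tau_dcoset // (coset_eltE LhC (lcoset_refl _ _)) zgaddE !zgmulE zgsubE.
by rewrite zgoneE -/(elt h) -/(elt g^-1) -/Ht -/K mulrBl mul1r opprB.
Qed.

Let conjU := fun u => exists k kinv w, [/\ gen S k, zginv k kinv, U w &
                                         u = zgmul (zgmul k w) kinv].

Lemma normal_closure_unit_tau u :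
  normal_closure_in S U u <-> exists2 c, in_aug_ideal H C c & u = 1 + tau c.
Proof.
change (gen conjU u <-> exists2 c, in_aug_ideal H C c & u = 1 + tau c); split.
  have gen_form s : conjU s -> exists2 c, in_aug_ideal H C c & s = 1 + tau c.
    case=> k [kinv [w [/gen_S_sdembed[p Dp <-] [_ kinvK] [h Hh ->] ->]]].
    have -> : kinv = sdembed (sdinv p) by apply: (@mulr_linv_uniq zg) (sdembedV Dp).1 kinvK.
    rewrite U_unit_tau //; apply: sdembed_conj_unit_tau => //.
    by apply/aug_idealN/aug_ideal_dcoset; rewrite lcosets_act ?C_lcosets.
  elim=> [|s x /gen_form[c Ic ->] _ [a Ia ->]|s t x /gen_form[c Ic ->] [_ tc] _ [a Ia ->]].
  - by exists 0; [apply: aug_ideal0 | rewrite raddf0 addr0].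
  - exists (c + a); first exact: aug_idealD.
    by rewrite zgmulE mul_unit_tau //; case/aug_idealE: Ia.
  - have /aug_idealE[_ uc] := Ic; have -> : t = 1 + tau (- c).
      by apply: (@mulr_linv_uniq zg) (unit_tau_inv uc).1 tc.
    exists (- c + a); first by apply: aug_idealD => //; apply: aug_idealN.
    by rewrite zgmulE mul_unit_tau //; case/aug_idealE: Ia.
case=> c Ic ->; apply: gen_unit_tau Ic => X LX.
set w := 1 + tau (- dcoset X).
have Sw : conjU w.
  exists (zgone gT), (zgone gT), w; split.
  - exact: gen_one.
  - by rewrite /zginv zgmulE zgoneE mulr1.
  - by exists (repr X); rewrite ?repr_lcosets // U_unit_tau ?repr_lcosets ?repr_lcoset.
  - by rewrite !zgmulE zgoneE mulr1 mul1r.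
have /aug_idealE[_ uaX] := aug_ideal_dcoset LX.
have wV : zginv w (1 + tau (dcoset X)).
  by have := @unit_tau_inv (- dcoset X); rewrite opprK; apply; rewrite raddfN /= uaX oppr0.
split; last by have := gen_mul Sw (gen_one _); rewrite zgmulE zgoneE mulr1.
by have := gen_mulinv Sw wV (gen_one _); rewrite zgmulE zgoneE mulr1.
Qed.

Let n := (#|H : C|%g - 1)%N.

Lemma card_lcosetsD1 : #|L :\ C| = n.
Proof. by rewrite /n -card_lcosets -/L (cardsD1 C L) C_lcosets add1n subSS subn0. Qed.

(* The nontrivial cosets, enumerated; their [dcoset]s form a basis of the augmentation
   ideal. *)
Definition nt_coset (i : 'I_n) : {set gT} := enum_val (cast_ord (esym card_lcosetsD1) i).

Lemma nt_cosetP i : nt_coset i \in L /\ nt_coset i != C.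
Proof. by have := enum_valP (cast_ord (esym card_lcosetsD1) i); rewrite in_setD1 => /andP[]. Qed.

Lemma nt_coset_inj : injective nt_coset.
Proof. by move=> i j /enum_val_inj /cast_ord_inj. Qed.

Definition aug_of_row (a : 'rV[int]_n) : {ffun {set gT} -> int} :=
  \sum_(i < n) dcoset (nt_coset i) *~ a 0 i.

Definition row_of_aug (c : {ffun {set gT} -> int}) : 'rV[int]_n := \row_i c (nt_coset i).

Lemma aug_of_rowD a b : aug_of_row (a + b) = aug_of_row a + aug_of_row b.
Proof. by rewrite /aug_of_row -big_split; apply: eq_bigr => i _; rewrite mxE mulrzDr. Qed.

Lemma aug_ideal_aug_of_row a : in_aug_ideal H C (aug_of_row a).
Proof.
apply: big_ind => [|b c|i _]; [exact: aug_ideal0 | exact: aug_idealD |].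
by apply/aug_idealMz/aug_ideal_dcoset; case: (nt_cosetP i).
Qed.

Lemma aug_of_row_coset a j : aug_of_row a (nt_coset j) = a 0 j.
Proof.
have neqC i : (nt_coset i == C) = false by apply/negbTE; case: (nt_cosetP i).
rewrite /aug_of_row sum_ffunE (bigD1 j) //= big1 ?addr0.
  by rewrite ffunMzE ffunE eqxx neqC subr0 intz.
move=> i nij; rewrite ffunMzE ffunE neqC subr0.
by rewrite (inj_eq nt_coset_inj) eq_sym (negbTE nij) mul0rz.
Qed.

Lemma sum_nt_coset (V : zmodType) (F : {set gT} -> V) :
  \sum_(i < n) F (nt_coset i) = \sum_(X in L :\ C) F X.
Proof.
rewrite [RHS]big_enum_val /nt_coset; case: n / card_lcosetsD1.
by apply: eq_bigr => i _; rewrite cast_ord_id.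
Qed.

Lemma aug_of_rowK c : in_aug_ideal H C c -> aug_of_row (row_of_aug c) = c.
Proof.
move=> Ic; rewrite -{2}(aug_ideal_decomp Ic) (big_setD1 C C_lcosets) dcoset_C mul0rz /= add0r.
by rewrite -sum_nt_coset; apply: eq_bigr => i _; rewrite mxE.
Qed.

End CosetEmbedding.

Theorem proposition6p3 (gT : finGroupType) (H : {group gT}) (g : gT) :
  let C := (H :&: (H :^ g))%g in
  let S := fun u : ZG gT => exists2 h, h \in H & (u = zgof h \/ u = psi g^-1 H h) in
  let U := fun u : ZG gT => exists2 h, h \in H &
             u = zgadd (zgone gT) (zgmul (zgsub (zgone gT) (zgof h)) (zgmul (zgof g^-1) (hsum H))) in
  (exists f : {ffun {set gT} -> int} * gT -> ZG gT,
     [/\ forall p q, sd_dom H C p -> sd_dom H C q -> f p = f q -> p = q,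
         forall p q, sd_dom H C p -> sd_dom H C q -> f (sdmul p q) = zgmul (f p) (f q) &
         forall u, gen S u <-> exists2 p, sd_dom H C p & f p = u])
  /\
  (exists phi : 'rV[int]_(#|H : C|%g - 1)%N -> ZG gT,
     [/\ forall a b, phi (a + b) = zgmul (phi a) (phi b),
         injective phi &
         forall u, normal_closure_in S U u <-> exists a, phi a = u]).
Proof.
move=> C S U; split.
  exists (sdembed H g); split; [exact: sdembed_inj | exact: sdembedM | exact: gen_S_sdembed].
exists (fun a => 1 + tau H g (aug_of_row a)); split.
- move=> a b; rewrite aug_of_rowD zgmulE mul_unit_tau //.
  by have /aug_idealE[] := aug_ideal_aug_of_row b.
- move=> a b /addrI /tau_inj_lcosets eq_ab; apply/rowP => j.
  by rewrite -!aug_of_row_coset eq_ab //; case: (nt_cosetP j).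
- move=> u; apply: iff_trans (normal_closure_unit_tau H g u) _.
  split=> [[c Ic ->]|[a <-]]; last by exists (aug_of_row a); first exact: aug_ideal_aug_of_row.
  by exists (row_of_aug H g c); rewrite aug_of_rowK.
Qed.
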